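(* Let $(A_i)_{i\in I}$ be any family of finite partially ordered sets, each with a least element $0_i$ and a greatest element $1_i$, and let $A=\prod_{i\in I}A_i$ with the componentwise partial order $\preccurlyeq$. Let $S$ be the set of elements of $A$ whose $i$-th coordinate is $0_i$ for all but at most one $i$, and $S'$ the set of elements whose $i$-th coordinate is $1_i$ for all but at most one $i$. Let $U(A)\subseteq 2^A$ be the set of up-sets of $(A,\preccurlyeq)$. Then for $x\in U(A)$ the following are equivalent: (i) $x$ is an isolated point of $U(A)$ in the topology induced by the natural topology on $2^A$; (ii) for some natural number $n$ and distinct $i_0,\dots,i_{n-1}\in I$, $x$ is the inverse image under the projection of $A$ onto $A_{i_0}\times\dots\times A_{i_{n-1}}$ of an up-set of that product; (iii) $x$ lies in the lattice of up-sets of $A$ generated (under pairwise unions and intersections) by $\emptyset$ and the sets ${\uparrow}(s)$ for $s\in S$; (iv) $A-x$ lies in the lattice of down-sets of $A$ generated (under pairwise unions and intersections) by $\emptyset$ and the sets ${\downarrow}(s)$ for $s\in S'$.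
   Context: An up-set (down-set) of a poset is a subset closed upward (downward). ${\uparrow}(a)=\{b\mid b\succcurlyeq a\}$ and ${\downarrow}(a)=\{b\mid b\preccurlyeq a\}$. The natural topology on $2^A$ (the set of subsets of $A$) is the product topology of copies of the discrete space $\{0,1\}$, with subbasis the sets $\{x\mid a\in x\}$ and $\{x\mid a\notin x\}$ for $a\in A$. *)

From HB Require Import structures.
From mathcomp Require Import all_boot all_order.
From mathcomp Require Import boolp classical_sets.
From Stdlib Require List.
Unset Printing Implicit Defensive.
Import Order.TTheory.
Local Open Scope classical_set_scope.
Local Open Scope order_scope.

Section Defs.
Context {I : Type} {d : I -> Order.disp_t} (A : forall i, finTBPOrderType (d i)).

Definition prodA := forall i, A i.
Definition ple (a b : prodA) : Prop := forall i, a i <= b i.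

Definition upset (x : set prodA) : Prop := forall a b, x a -> ple a b -> x b.
Definition downset (x : set prodA) : Prop := forall a b, x b -> ple a b -> x a.
Definition upcl (a : prodA) : set prodA := [set b | ple a b].
Definition downcl (a : prodA) : set prodA := [set b | ple b a].

Definition Sset : set prodA :=
  [set a | forall i j, a i != \bot -> a j != \bot -> i = j].
Definition Sset' : set prodA :=
  [set a | forall i j, a i != \top -> a j != \top -> i = j].

(* natural (product of discrete {0,1}) topology on 2^A:
   basic open sets are finite intersections of subbasic sets
   {x | a \in x} (a in P) and {x | a \notin x} (a in N). *)
Definition basic_open (P N : seq prodA) : set (set prodA) :=
  [set y | (forall a, Stdlib.Lists.List.In a P -> y a) /\ (forall a, Stdlib.Lists.List.In a N -> ~ y a)].
Definition nat_open (O : set (set prodA)) : Prop :=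
  forall y, O y -> exists P N, basic_open P N y /\ basic_open P N `<=` O.

Definition UA : set (set prodA) := [set x | upset x].

Definition isolated_in (U : set (set prodA)) (x : set prodA) : Prop :=
  U x /\ exists O, nat_open O /\ O `&` U = [set x].

Definition finitely_determined (x : set prodA) : Prop :=
  exists (n : nat) (idx : 'I_n -> I), injective idx /\
  exists y : set (forall k : 'I_n, A (idx k)),
    (forall a b : (forall k : 'I_n, A (idx k)),
        y a -> (forall k, a k <= b k) -> y b) /\
    x = [set a : prodA | y (fun k => a (idx k))].
End Defs.

Inductive gen_lattice {T : Type} (G : set (set T)) : set T -> Prop :=
  | gl_empty : gen_lattice G set0
  | gl_base : forall s, G s -> gen_lattice G s
  | gl_union : forall s t, gen_lattice G s -> gen_lattice G t -> gen_lattice G (s `|` t)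
  | gl_inter : forall s t, gen_lattice G s -> gen_lattice G t -> gen_lattice G (s `&` t).

(* All four conditions say that the up-set [x] depends on finitely many coordinates only.
   If [x] is isolated, some basic neighbourhood (finitely many points [P] required in,
   [N] required out) contains no other up-set, so [x] is generated by [P] and its complement
   by [N]; separating each pair [p <= n] by a coordinate leaves finitely many coordinates
   that decide membership in [x].  Conversely, if [x] depends on the coordinates [J] only,
   then, the [A i] being finite, [x] is a finite union of cones [upcl b] with [b] equal to
   [\bot] outside [J]; such a cone is the intersection over [i] in [J] of cones of points of
   [S], and the same finitely many points pin [x] down among up-sets.  Condition (iv) is
   condition (iii) for the dual orders, applied to the up-set [~` x] of the dual product. *)

From mathcomp Require Import all_boot all_order.
From mathcomp Require Import boolp classical_sets.
From Stdlib Require List.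
Import Order.TTheory.
Local Open Scope classical_set_scope.

Local Notation In := List.In.

Lemma In_cons_set (T : Type) (a : T) (L : seq T) :
  [set t | In t (a :: L)] = a |` [set t | In t L].
Proof. by apply/funext => t; apply/propext; split => -[->|]; by [left|right]. Qed.

Lemma In_mem (T : eqType) (t : T) (s : seq T) : t \in s -> In t s.
Proof. by elim: s => [|a s IH] //; rewrite in_cons => /predU1P [->|/IH]; [left|right]. Qed.

Lemma In_enum (T : finType) (t : T) : In t (enum T).
Proof. by apply: In_mem; rewrite mem_enum. Qed.

Section FiniteLists.
Context {T : Type}.

Lemma gen_lattice_bigcup (G : set (set T)) (U : Type) (L : seq U) (F : U -> set T) :
  (forall u, In u L -> gen_lattice G (F u)) ->
  gen_lattice G (\bigcup_(u in [set u | In u L]) F u).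
Proof.
elim: L => [|u L IH] GF; first by rewrite bigcup_set0; exact: gl_empty.
rewrite In_cons_set bigcup_setU1; apply: gl_union; first by apply: GF; left.
by apply: IH => v Lv; apply: GF; right.
Qed.

Lemma gen_lattice_bigcap (G : set (set T)) (U : Type) (L : seq U) (F : U -> set T) :
  gen_lattice G setT -> (forall u, In u L -> gen_lattice G (F u)) ->
  gen_lattice G (\bigcap_(u in [set u | In u L]) F u).
Proof.
move=> GT; elim: L => [|u L IH] GF; first by rewrite bigcap_set0.
rewrite In_cons_set bigcap_setU1; apply: gl_inter; first by apply: GF; left.
by apply: IH => v Lv; apply: GF; right.
Qed.

Lemma finite_choice (U : Type) (Q : T -> U -> Prop) (L : seq T) :
  (forall t, In t L -> exists u, Q t u) ->
  exists K : seq U, (forall u, In u K -> exists2 t, In t L & Q t u) /\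
                    (forall t, In t L -> exists2 u, In u K & Q t u).
Proof.
elim: L => [|t L IH] QL; first by exists [::].
have [u Qtu] := QL t (or_introl erefl).
have [K [KL LK]] := IH (fun s Ls => QL s (or_intror Ls)).
exists (u :: K); split.
  by move=> v [<-|/KL [s Ls Qsv]]; [exists t; first left|exists s; first right].
by move=> s [<-|/LK [v Kv Qsv]]; [exists u; first left|exists v; first right].
Qed.

Lemma enum_of_seq (L : seq T) :
  exists n (idx : 'I_n -> T), injective idx /\
    forall t, In t L <-> exists k, idx k = t.
Proof.
elim: L => [|t L [n [idx [idx_inj idxL]]]].
  have idx0 : 'I_0 -> T by case=> m; rewrite ltn0.
  by exists 0, idx0; split => [[]//|t]; split => [[]|[[]]].
case: (pselect (In t L)) => Lt.
  exists n, idx; split => // s; rewrite -idxL; split => [[<-|]//|]; by right.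
pose idx' (k : 'I_n.+1) := if unlift ord0 k is Some k' then idx k' else t.
exists n.+1, idx'; split.
  move=> k1 k2; rewrite /idx'.
  case: unliftP => [k1' ->|->]; case: unliftP => [k2' ->|->] //.
  - by move/idx_inj ->.
  - by move=> e; case: Lt; apply/idxL; exists k1'.
  - by move=> e; case: Lt; apply/idxL; exists k2'.
move=> s; split.
  case=> [<-|/idxL [k <-]]; first by exists ord0; rewrite /idx' unlift_none.
  by exists (lift ord0 k); rewrite /idx' liftK.
case=> k; rewrite /idx'; case: unliftP => [k' _ <-|_ <-]; last by left.
by right; apply/idxL; exists k'.
Qed.

End FiniteLists.

Section ProductPoset.
Context {I : Type} {d : I -> Order.disp_t} (A : forall i, finTBPOrderType (d i)).
Local Notation PA := (prodA A).

Definition agree_on (J : seq I) (a b : PA) : Prop := forall i, In i J -> a i = b i.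

Definition determined_by (J : seq I) (x : set PA) : Prop :=
  forall a b, agree_on J a b -> x a -> x b.

Definition finitely_supported (x : set PA) : Prop := exists J, determined_by J x.

Definition transversal (J : seq I) (x : set PA) (L : seq PA) : Prop :=
  (forall b, In b L -> x b) /\ (forall a, x a -> exists2 b, In b L & agree_on J b a).

Lemma agree_on_sym {J a b} : agree_on J a b -> agree_on J b a.
Proof. by move=> ab i Ji; rewrite ab. Qed.

Lemma agree_on_catl {J K a b} : agree_on (J ++ K) a b -> agree_on J a b.
Proof. by move=> ab i Ji; apply: ab; apply: List.in_or_app; left. Qed.

Lemma agree_on_catr {J K a b} : agree_on (J ++ K) a b -> agree_on K a b.
Proof. by move=> ab i Ki; apply: ab; apply: List.in_or_app; right. Qed.

Lemma finitely_supportedC x : finitely_supported x -> finitely_supported (~` x).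
Proof.
by case=> J xJ; exists J => a b /agree_on_sym ab nxa xb; apply/nxa/(xJ b _ ab).
Qed.

Lemma finitely_supported_setC x : finitely_supported (~` x) <-> finitely_supported x.
Proof.
split; last exact: finitely_supportedC.
by rewrite -{2}[x]setCK; exact: finitely_supportedC.
Qed.

Lemma finitely_supportedU x y :
  finitely_supported x -> finitely_supported y -> finitely_supported (x `|` y).
Proof.
move=> [J xJ] [K yK]; exists (J ++ K) => a b ab [xa|ya].
  by left; exact: xJ _ _ (agree_on_catl ab) xa.
by right; exact: yK _ _ (agree_on_catr ab) ya.
Qed.

Lemma finitely_supportedI x y :
  finitely_supported x -> finitely_supported y -> finitely_supported (x `&` y).
Proof.
move=> [J xJ] [K yK]; exists (J ++ K) => a b ab [xa ya].
by split; [exact: xJ _ _ (agree_on_catl ab) xa|exact: yK _ _ (agree_on_catr ab) ya].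
Qed.

(* Induction on [J]: split [x] according to the (finitely many) values of the new coordinate. *)
Lemma transversal_exists J x : exists L, transversal J x L.
Proof.
elim: J x => [|i J IH] x.
  have [[a xa]|nx] := pselect (exists a, x a).
    by exists [:: a]; split => [b [<-|[]]//|b _]; exists a; first left.
  by exists [::]; split => // a xa; case: nx; exists a.
have [Ls [Ls_sound Ls_complete]] :=
  @finite_choice _ _ (fun v La => transversal J [set a | x a /\ a i = v] La)
    (enum (A i)) (fun v _ => IH [set a | x a /\ a i = v]).
exists (List.concat Ls); split.
  move=> b /List.in_concat [La [/Ls_sound [v _ [La_x _]] Lab]].
  by have [] := La_x b Lab.
move=> a xa; have [La Ls_La [La_x La_a]] := Ls_complete (a i) (In_enum _ _).
have [b Lab ba] := La_a a (conj xa erefl).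
exists b; first by apply/List.in_concat; exists La.
by move=> j [<-|Jj]; [case: (La_x b Lab)|exact: ba].
Qed.

Definition pad_bot (J : seq I) (b : PA) : PA :=
  fun j => if pselect (In j J) then b j else \bot%O.
Definition pad_top (J : seq I) (b : PA) : PA :=
  fun j => if pselect (In j J) then b j else \top%O.

Lemma pad_bot_agree J b : agree_on J (pad_bot J b) b.
Proof. by move=> i Ji; rewrite /pad_bot; case: pselect. Qed.

Lemma pad_top_agree J b : agree_on J (pad_top J b) b.
Proof. by move=> i Ji; rewrite /pad_top; case: pselect. Qed.

Lemma ple_pad_bot {J b c} : agree_on J b c -> ple A (pad_bot J b) c.
Proof. by move=> bc j; rewrite /pad_bot; case: pselect => [Jj|nJj] /=; rewrite ?bc ?le0x. Qed.

Lemma ple_pad_top {J b c} : agree_on J b c -> ple A c (pad_top J b).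
Proof. by move=> bc j; rewrite /pad_top; case: pselect => [Jj|nJj] /=; rewrite ?bc ?lex1. Qed.

Lemma nat_open_basic_open P N : nat_open A (basic_open A P N).
Proof. by move=> y Py; exists P, N; split. Qed.

(* Up to [J], [x] is pinned down by finitely many points: representatives of [x] padded with
   [\bot] must lie in any competitor, representatives of [~` x] padded with [\top] must not. *)
Lemma isolated_of_finitely_supported x :
  upset A x -> finitely_supported x -> isolated_in A (UA A) x.
Proof.
move=> ux [J xJ].
have [L [Lx xL]] := transversal_exists J x.
have [M [Mx xM]] := transversal_exists J (~` x).
split=> //; exists (basic_open A (map (pad_bot J) L) (map (pad_top J) M)).
split; first exact: nat_open_basic_open.
apply/seteqP; split=> [y [[Py Ny] Uy]|_ ->].
  have uy : upset A y := Uy.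
  apply/seteqP; split=> c.
    move=> yc; apply: contrapT => nxc; have [b Mb bc] := xM c nxc.
    apply: (Ny (pad_top J b)); first by apply/List.in_map_iff; exists b.
    exact: uy _ _ yc (ple_pad_top bc).
  move=> xc; have [b Lb bc] := xL c xc; apply: uy (ple_pad_bot bc).
  by apply: Py; apply/List.in_map_iff; exists b.
split=> //; split=> a /List.in_map_iff [b [<- Lb]].
  exact: xJ _ _ (agree_on_sym (pad_bot_agree J b)) (Lx b Lb).
by move=> xa; apply: (Mx b Lb); exact: xJ _ _ (pad_top_agree J b) xa.
Qed.

Lemma isolated_basic_nbhd x : isolated_in A (UA A) x ->
  exists P N, basic_open A P N x /\
    forall y, upset A y -> basic_open A P N y -> y = x.
Proof.
(* [isolated_in] uses the lattice meet [`&`%O] of sets, which unfolds to [setI]. *)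
case=> _ [O [oO OU]].
have [] : (O `&` UA A)%O x by rewrite OU.
move=> /oO [P [N [Px PO]]] _; exists P, N; split=> // y uy Py.
have : (O `&` UA A)%O y by exact: (conj (PO y Py) uy).
by rewrite OU.
Qed.

(* Each pair [p <= n] with [p] below [x] and [n] outside is broken at some coordinate;
   these finitely many coordinates determine [x]. *)
Lemma finitely_supported_of_separated (P N : seq PA) x :
  (forall c, x c -> exists2 p, In p P & ple A p c) ->
  (forall c, ~ x c -> exists2 n, In n N & ple A c n) ->
  (forall p n, In p P -> In n N -> ~ ple A p n) ->
  finitely_supported x.
Proof.
move=> xP nxN PN.
have [|J [_ J_sep]] :=
  @finite_choice _ _ (fun pn i => ~ (pn.1 i <= pn.2 i)%O) (List.list_prod P N).
  case=> p n /List.in_prod_iff [Pp Nn]; apply: contrapT => sep.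
  by apply: (PN _ _ Pp Nn) => i; apply: contrapT => npn; apply: sep; exists i.
exists J => a b ab xa; apply: contrapT => nxb.
have [p Pp pa] := xP a xa; have [n Nn bn] := nxN b nxb.
have [i Ji /= npn] := J_sep (p, n) (List.in_prod _ _ _ _ Pp Nn).
by apply: npn; apply: le_trans (pa i) _; rewrite ab.
Qed.

Lemma finitely_supported_of_isolated x :
  upset A x -> isolated_in A (UA A) x -> finitely_supported x.
Proof.
move=> ux /isolated_basic_nbhd [P [N [[Px Nx] x_unique]]].
have PN p n : In p P -> In n N -> ~ ple A p n.
  by move=> Pp Nn pn; apply: (Nx n Nn); exact: ux _ _ (Px p Pp) pn.
have upP : [set c | exists2 p, In p P & ple A p c] = x.
  apply: x_unique.
    by move=> a b [p Pp pa] ab; exists p => // i; exact: le_trans (pa i) (ab i).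
  split=> [a Pa|n Nn [p Pp]]; last exact: PN.
  by exists a => // i; exact: lexx.
have downN : ~` [set c | exists2 n, In n N & ple A c n] = x.
  apply: x_unique.
    by move=> a b na ab [n Nn bn]; apply: na; exists n => // i; exact: le_trans (ab i) (bn i).
  split=> [p Pp [n Nn]|n Nn]; first exact: PN.
  by apply; exists n => // i; exact: lexx.
apply: (@finitely_supported_of_separated P N) PN.
  by rewrite -upP.
by rewrite -downN => c /contrapT.
Qed.

Lemma isolated_iff_finitely_supported x :
  upset A x -> isolated_in A (UA A) x <-> finitely_supported x.
Proof.
move=> ux; split; [exact: finitely_supported_of_isolated|].
exact: isolated_of_finitely_supported.
Qed.

Definition extend_along {n} (idx : 'I_n -> I) (t : forall k, A (idx k)) (a : PA) : PA :=
  fun j => if pselect (exists k, idx k = j) is left h then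
             let: exist k e := cid h in eq_rect (idx k) (fun i => A i : Type) (t k) j e
           else a j.

Lemma extend_along_idx n (idx : 'I_n -> I) t a k :
  injective idx -> extend_along idx t a (idx k) = t k.
Proof.
move=> idx_inj; rewrite /extend_along; case: pselect => [h|[]]; last by exists k.
case: (cid h) => k' e; have kk := idx_inj _ _ e; subst k'.
by rewrite (Prop_irrelevance e erefl).
Qed.

Lemma ple_extend_along n (idx : 'I_n -> I) t a :
  (forall k, (a (idx k) <= t k)%O) -> ple A a (extend_along idx t a).
Proof.
move=> a_le_t j; rewrite /extend_along; case: pselect => [h|_]; last exact: lexx.
by case: (cid h) => k e; clear h; case: j / e; exact: a_le_t.
Qed.

Lemma finitely_determined_of_finitely_supported x :
  upset A x -> finitely_supported x -> finitely_determined A x.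
Proof.
move=> ux [J xJ]; have [n [idx [idx_inj J_idx]]] := enum_of_seq J.
exists n, idx; split=> //.
exists [set t | exists2 b, x b & forall k, b (idx k) = t k]; split.
  move=> t t' [a xa a_t] tt'; exists (extend_along idx t' a).
    by apply: ux xa _; apply: ple_extend_along => k; rewrite a_t.
  by move=> k; rewrite extend_along_idx.
apply/seteqP; split=> [c xc|c [b xb bc]]; first by exists c.
by apply: xJ xb => i /J_idx [k <-].
Qed.

Lemma finitely_supported_of_finitely_determined x :
  finitely_determined A x -> finitely_supported x.
Proof.
case=> n [idx [_ [y [uy ->]]]]; exists (map idx (enum 'I_n)) => a b ab ya.
apply: (uy _ _ ya) => k; rewrite ab ?lexx //.
by apply/List.in_map_iff; exists k; split; last exact: In_enum.
Qed.

Lemma finitely_determined_iff x :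
  upset A x -> finitely_determined A x <-> finitely_supported x.
Proof.
move=> ux; split; first exact: finitely_supported_of_finitely_determined.
exact: finitely_determined_of_finitely_supported.
Qed.

Definition S_cones : set (set PA) := [set u | exists s, Sset A s /\ u = upcl A s].

Lemma finitely_supported_upcl s : Sset A s -> finitely_supported (upcl A s).
Proof.
move=> Ss; have [[i si]|s_bot] := pselect (exists i, s i != \bot%O).
  exists [:: i] => a b ab sa j; have [->|sj] := eqVneq (s j) \bot%O; first exact: le0x.
  by rewrite -(Ss i j si sj) -ab //; left.
exists [::] => a b _ _ j; have [->|sj] := eqVneq (s j) \bot%O; first exact: le0x.
by case: s_bot; exists j.
Qed.

Lemma finitely_supported_of_gen_lattice x :
  gen_lattice S_cones x -> finitely_supported x.
Proof.
elim=> [|_ [s [Ss ->]]|u v _ fu _ fv|u v _ fu _ fv].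
- by exists [::].
- exact: finitely_supported_upcl.
- exact: finitely_supportedU.
- exact: finitely_supportedI.
Qed.

Lemma Sset_pad_bot1 i b : Sset A (pad_bot [:: i] b).
Proof.
have off_i j : pad_bot [:: i] b j != \bot%O -> j = i.
  by rewrite /pad_bot; case: pselect => [[ij _|[]]|_] //=; rewrite eqxx.
by move=> j k /off_i -> /off_i ->.
Qed.

Lemma upcl_pad_bot J b :
  upcl A (pad_bot J b) = \bigcap_(i in [set i | In i J]) upcl A (pad_bot [:: i] b).
Proof.
apply/seteqP; split=> c.
  move=> bc i Ji j; rewrite /pad_bot; case: pselect => [[ij|[]]|nj] /=; last exact: le0x.
  by subst j; have := bc i; rewrite /pad_bot; case: pselect.
move=> bc j; rewrite /pad_bot; case: pselect => [Jj|nJj] /=; last exact: le0x.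
by have := bc j Jj j; rewrite /pad_bot; case: pselect => [_|[]] //; left.
Qed.

Lemma gen_lattice_upcl_pad_bot J b : gen_lattice S_cones (upcl A (pad_bot J b)).
Proof.
rewrite upcl_pad_bot; apply: gen_lattice_bigcap => [|i _].
  have -> : setT = upcl A (fun=> \bot%O) by apply/seteqP; split=> // c _ j; exact: le0x.
  by apply: gl_base; exists (fun=> \bot%O); split=> // i j; rewrite eqxx.
by apply: gl_base; exists (pad_bot [:: i] b); split; first exact: Sset_pad_bot1.
Qed.

Lemma upset_eq_bigcup_upcl {J x L} : upset A x -> determined_by J x -> transversal J x L ->
  x = \bigcup_(b in [set b | In b L]) upcl A (pad_bot J b).
Proof.
move=> ux xJ [Lx xL]; apply/seteqP; split=> [c xc|c [b Lb bc]].
  by have [b Lb bc] := xL c xc; exists b => //; exact: ple_pad_bot bc.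
by apply: ux bc; exact: xJ _ _ (agree_on_sym (pad_bot_agree J b)) (Lx b Lb).
Qed.

Lemma gen_lattice_of_finitely_supported x :
  upset A x -> finitely_supported x -> gen_lattice S_cones x.
Proof.
move=> ux [J xJ]; have [L xL] := transversal_exists J x.
rewrite (upset_eq_bigcup_upcl ux xJ xL); apply: gen_lattice_bigcup => b _.
exact: gen_lattice_upcl_pad_bot.
Qed.

Lemma gen_lattice_S_cones_iff x :
  upset A x -> gen_lattice S_cones x <-> finitely_supported x.
Proof.
move=> ux; split; first exact: finitely_supported_of_gen_lattice.
exact: gen_lattice_of_finitely_supported.
Qed.

End ProductPoset.

Definition dual_family {I : Type} {d : I -> Order.disp_t}
    (A : forall i, finTBPOrderType (d i)) : forall i, finTBPOrderType (Order.dual_display (d i)) :=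
  fun i => ((A i)^d)%type.

Lemma upset_dual_setC {I : Type} {d : I -> Order.disp_t}
    {A : forall i, finTBPOrderType (d i)} {x : set (prodA A)} :
  upset A x -> upset (dual_family A) (~` x).
Proof. by move=> ux a b nxa ba xb; apply/nxa/(ux b). Qed.

Theorem lemma9p1 (I : Type) (d : I -> Order.disp_t)
    (A : forall i, finTBPOrderType (d i)) (x : set (prodA A)) :
  upset A x ->
  (isolated_in A (UA A) x <-> finitely_determined A x) /\
  (isolated_in A (UA A) x <->
     gen_lattice [set u | exists s, Sset A s /\ u = upcl A s] x) /\
  (isolated_in A (UA A) x <->
     gen_lattice [set u | exists s, Sset' A s /\ u = downcl A s] (~` x)).
Proof.
move=> ux; have iso := isolated_iff_finitely_supported _ _ ux.
split; [|split].
- exact: iff_trans iso (iff_sym (finitely_determined_iff _ _ ux)).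
- exact: iff_trans iso (iff_sym (gen_lattice_S_cones_iff _ _ ux)).
- apply: iff_trans iso (iff_sym _).
  exact: iff_trans (gen_lattice_S_cones_iff _ _ (upset_dual_setC ux))
                   (finitely_supported_setC _ _).
Qed.
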